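(* Let $\phi$ be a quantifier-free sentence of $\mathscr{L}_{\max}$. For every $f:\mathbb{N}\to\mathbb{N}$, $\mathscr{M}_f\models\phi$ if and only if there is some $k\in\mathbb{N}$ such that for every $g:\mathbb{N}\to\mathbb{N}$ extending $(f(0),\ldots,f(k))$, $\mathscr{M}_g\models\phi$, and checking $\mathscr{M}_g\models\phi$ via the inductive definition of the semantics never requires querying $g(i)$ for any $i>k$.
   Context: $\mathbb{N}^{<\mathbb{N}}$ denotes the set of finite sequences of naturals. The language $\mathscr{L}_{\max}$ is a first-order language extended with ellipses. Its symbols: a constant symbol $\mathbf{n}$ (also written $\bar n$) for each $n\in\mathbb{N}$; an $n$-ary function symbol $\tilde w$ for each $w:\mathbb{N}^n\to\mathbb{N}$ ($n>0$); an $n$-ary predicate symbol $\tilde p$ for each $p\subseteq\mathbb{N}^n$ ($n>0$); an ''$\mathbb{N}^{<\mathbb{N}}$-ary'' function symbol $\tilde G$ for each $G:\mathbb{N}^{<\mathbb{N}}\to\mathbb{N}$; one extra unary function symbol $\mathbf{f}$; and, for each variable $x$, a logical symbol $\cdots_x$. Terms and their free variables: a variable $x$ (free variables $\{x\}$); a constant (no free variables); $h(t_1,\ldots,t_n)$ for $h$ an $n$-ary or $\mathbb{N}^{<\mathbb{N}}$-ary function symbol and terms $t_i$ (free variables the union); and, for an $\mathbb{N}^{<\mathbb{N}}$-ary $G$, terms $u,v$ and a variable $x$, the term $G(u(\mathbf{0}),\cdots_x,u(v))$ with free variables $(FV(u)\setminus\{x\})\cup FV(v)$. Formulas are built from these terms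 as usual. Substitution is defined as usual with two new cases: for $y\neq x$, $G(u(\mathbf{0}),\cdots_x,u(v))(y|t)=G(u(y|t)(\mathbf{0}),\cdots_x,u(y|t)(v(y|t)))$, and $G(u(\mathbf{0}),\cdots_x,u(v))(x|t)=G(u(\mathbf{0}),\cdots_x,u(v(x|t)))$. For $f:\mathbb{N}\to\mathbb{N}$, $\mathscr{M}_f$ is the structure with universe $\mathbb{N}$ interpreting $\mathbf{n}$ as $n$, $\tilde w$ as $w$, $\tilde p$ as $p$, $\tilde G$ as $G$, and $\mathbf{f}$ as $f$. Under an assignment $s$, terms are evaluated by the usual induction plus the clause $G(u(\mathbf{0}),\cdots_x,u(v))^{s}=G\big(u(x|\mathbf{0})^{s},\ldots,u(x|\overline{v^{s}})^{s}\big)$; satisfaction is then defined as usual. ''Querying $g(i)$'' means applying the interpretation $g$ of $\mathbf{f}$ to the argument $i$ during this inductive evaluation. *)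

From mathcomp Require Import all_boot.
Set Implicit Arguments. Unset Strict Implicit. Unset Printing Implicit Defensive.

(** An n-ary
                          symbol \tilde w (w : N^n -> N) applied to n terms is
                          represented by a function on sequences whose value on
                          length-n sequences is w; an N^{<N}-ary symbol
                          \tilde G is represented by G itself.
    - [TF t]            : the extra unary symbol f applied to t
    - [TEll G x u v]    : G(u(0), ..._x, u(v)). *)
Inductive term : Type :=
| TVar of nat
| TConst of nat
| TApp of (seq nat -> nat) & seq term
| TF of term
| TEll of (seq nat -> nat) & nat & term & term.

(** Quantifier-free formulas. An n-ary predicate symbol \tilde p
    (p subset of N^n) is represented by a predicate on sequences whose
    restriction to length-n sequences is p. *)
Inductive qfformula : Type :=
| FEq of term & term
| FPred of (seq nat -> Prop) & seq term
| FFalse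
| FNot of qfformula
| FAnd of qfformula & qfformula
| FOr of qfformula & qfformula
| FImp of qfformula & qfformula.

Fixpoint tfv (t : term) : seq nat :=
  match t with
  | TVar x => [:: x]
  | TConst _ => [::]
  | TApp _ ts => flatten (map tfv ts)
  | TF t => tfv t
  | TEll _ x u v => [seq y <- tfv u | y != x] ++ tfv v
  end.

Fixpoint ffv (phi : qfformula) : seq nat :=
  match phi with
  | FEq t1 t2 => tfv t1 ++ tfv t2
  | FPred _ ts => flatten (map tfv ts)
  | FFalse => [::]
  | FNot p => ffv p
  | FAnd p q | FOr p q | FImp p q => ffv p ++ ffv q
  end.

Definition qf_sentence (phi : qfformula) : Prop := ffv phi = [::].

Definition upd (s : nat -> nat) (x n : nat) : nat -> nat :=
  fun y => if y == x then n else s y.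

(** The clause for ellipsis terms is
    G(u(x|0)^s, ..., u(x|\bar{v^s})^s), where u(x|\bar j)^s is computed as
    u^{s[x:=j]} (substitution lemma for the closed numeral \bar j). *)
Fixpoint teval (g : nat -> nat) (s : nat -> nat) (t : term) : nat :=
  match t with
  | TVar x => s x
  | TConst n => n
  | TApp G ts => G (map (teval g s) ts)
  | TF t => g (teval g s t)
  | TEll G x u v =>
      G [seq teval g (upd s x j) u | j <- iota 0 (teval g s v).+1]
  end.

Fixpoint tqueries (g : nat -> nat) (s : nat -> nat) (t : term) : seq nat :=
  match t with
  | TVar _ => [::]
  | TConst _ => [::]
  | TApp _ ts => flatten (map (tqueries g s) ts)
  | TF t => tqueries g s t ++ [:: teval g s t]
  | TEll _ x u v =>
      tqueries g s v ++
      flatten [seq tqueries g (upd s x j) u | j <- iota 0 (teval g s v).+1]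
  end.

Fixpoint fsat (g : nat -> nat) (s : nat -> nat) (phi : qfformula) : Prop :=
  match phi with
  | FEq t1 t2 => teval g s t1 = teval g s t2
  | FPred p ts => p (map (teval g s) ts)
  | FFalse => False
  | FNot p => ~ fsat g s p
  | FAnd p q => fsat g s p /\ fsat g s q
  | FOr p q => fsat g s p \/ fsat g s q
  | FImp p q => fsat g s p -> fsat g s q
  end.

(** Queries made while checking satisfaction via the inductive definition
    (every atomic subformula is evaluated). *)
Fixpoint fqueries (g : nat -> nat) (s : nat -> nat) (phi : qfformula) : seq nat :=
  match phi with
  | FEq t1 t2 => tqueries g s t1 ++ tqueries g s t2
  | FPred _ ts => flatten (map (tqueries g s) ts)
  | FFalse => [::]
  | FNot p => fqueries g s p
  | FAnd p q | FOr p q | FImp p q => fqueries g s p ++ fqueries g s q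
  end.

(** For sentences the assignment is irrelevant; we use the constant-0 one. *)
Definition s0 : nat -> nat := fun _ => 0.

Definition models (g : nat -> nat) (phi : qfformula) : Prop := fsat g s0 phi.

Definition queries (g : nat -> nat) (phi : qfformula) : seq nat := fqueries g s0 phi.

(** If [g] agrees with [f] at every argument queried while checking
    [M_f |= phi], then the inductive evaluation under [g] takes exactly the
    same course as under [f]: every term gets the same value, the same
    arguments are queried, and [phi] gets the same truth value.  Taking [k]
    to be the largest query made under [f] gives the forward direction; the
    converse is the instance [g := f]. *)

From mathcomp Require Import all_boot.
From Stdlib Require List.

Section TermNestedInd.

Variable P : term -> Prop.
Hypothesis P_var : forall x, P (TVar x).
Hypothesis P_const : forall n, P (TConst n).
Hypothesis P_app : forall G ts, List.Forall P ts -> P (TApp G ts).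
Hypothesis P_f : forall t, P t -> P (TF t).
Hypothesis P_ell : forall G x u v, P u -> P v -> P (TEll G x u v).

Fixpoint term_nested_ind (t : term) : P t :=
  match t with
  | TVar x => P_var x
  | TConst n => P_const n
  | TApp G ts =>
      P_app G ts ((fix all_P (ts : seq term) : List.Forall P ts :=
        match ts with
        | [::] => @List.Forall_nil _ P
        | t :: ts' => @List.Forall_cons _ P t ts' (term_nested_ind t) (all_P ts')
        end) ts)
  | TF t => P_f t (term_nested_ind t)
  | TEll G x u v => P_ell G x u v (term_nested_ind u) (term_nested_ind v)
  end.

End TermNestedInd.

Section AgreeOnQueries.

Variables f g : nat -> nat.

Lemma agree_catl {a b : seq nat} : {in a ++ b, g =1 f} -> {in a, g =1 f}.
Proof. by apply: sub_in1 => i ai; rewrite mem_cat ai. Qed.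

Lemma agree_catr {a b : seq nat} : {in a ++ b, g =1 f} -> {in b, g =1 f}.
Proof. by apply: sub_in1 => i bi; rewrite mem_cat bi orbT. Qed.

Lemma agree_flatten {ls : seq (seq nat)} {l : seq nat} :
  l \in ls -> {in flatten ls, g =1 f} -> {in l, g =1 f}.
Proof. by move=> lls; apply: sub_in1 => i il; apply/flattenP; exists l. Qed.

Definition eval_agrees (t : term) : Prop :=
  forall s, {in tqueries f s t, g =1 f} ->
  teval g s t = teval f s t /\ tqueries g s t = tqueries f s t.

Lemma map_eval_agrees {ts : seq term} {s : nat -> nat} :
  List.Forall eval_agrees ts ->
  {in flatten (map (tqueries f s) ts), g =1 f} ->
  map (teval g s) ts = map (teval f s) ts /\
  flatten (map (tqueries g s) ts) = flatten (map (tqueries f s) ts).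
Proof.
elim=> [|t ts' agree_t _ IHts'] //= gf.
have [-> ->] := agree_t s (agree_catl gf).
by have [-> ->] := IHts' (agree_catr gf).
Qed.

Lemma teval_tqueries_agree (t : term) : eval_agrees t.
Proof.
(* [cbn] rather than [/=], so that [iota 0 _.+1] stays folded. *)
elim/term_nested_ind: t => [x|n|G ts IHts|t IHt|G x u v IHu IHv] s;
  cbn [teval tqueries] => gf //.
- by have [-> ->] := map_eval_agrees IHts gf.
- have [-> ->] := IHt s (agree_catl gf).
  by rewrite gf // mem_cat mem_seq1 eqxx orbT.
- have [-> ->] := IHv s (agree_catl gf).
  have IHu_j j : j \in iota 0 (teval f s v).+1 ->
      teval g (upd s x j) u = teval f (upd s x j) u /\
      tqueries g (upd s x j) u = tqueries f (upd s x j) u.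
    by move=> jv; apply: IHu; exact: agree_flatten (map_f _ jv) (agree_catr gf).
  by split; [congr (G _) | congr (_ ++ flatten _)]; apply/eq_in_map => j /IHu_j [].
Qed.

Lemma fsat_fqueries_agree (phi : qfformula) (s : nat -> nat) :
  {in fqueries f s phi, g =1 f} ->
  (fsat g s phi <-> fsat f s phi) /\ fqueries g s phi = fqueries f s phi.
Proof.
elim: phi => [t1 t2|p ts| |p IHp|p IHp q IHq|p IHp q IHq|p IHp q IHq] /= gf.
- have [-> ->] := teval_tqueries_agree _ _ (agree_catl gf).
  by have [-> ->] := teval_tqueries_agree _ _ (agree_catr gf).
- have agree_ts : List.Forall eval_agrees ts.
    by apply/List.Forall_forall => t _; apply: teval_tqueries_agree.
  by have [-> ->] := map_eval_agrees agree_ts gf.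
- by [].
- by have [sat_p ->] := IHp gf; split; first by rewrite sat_p.
all: have [sat_p ->] := IHp (agree_catl gf).
all: by have [sat_q ->] := IHq (agree_catr gf); rewrite sat_p sat_q.
Qed.

End AgreeOnQueries.

Theorem corollary3p6 (phi : qfformula) (Hphi : qf_sentence phi) (f : nat -> nat) :
  models f phi <->
  exists k : nat, forall g : nat -> nat,
    (forall i, i <= k -> g i = f i) ->
    models g phi /\ (forall i, i \in queries g phi -> i <= k).
Proof.
split=> [Mf | [k Mk]]; last by case: (Mk f (fun _ _ => erefl)).
pose k := \max_(i <- queries f phi) i.
have query_le_k i : i \in queries f phi -> i <= k by move/leq_bigmax_seq; apply.
exists k => g gf.
have [sat_phi same_queries] :=
  @fsat_fqueries_agree f g phi s0 (fun i qi => gf i (query_le_k i qi)).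
by split=> [|i]; [apply/sat_phi | rewrite /queries same_queries; apply: query_le_k].
Qed.
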